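(* Assume the index sets are ordered ($\mathcal I_1=\{1,\dots,l\}$, $\mathcal I_0=\{l+1,\dots,n\}$) and let $\psi$ be the SC decoder. Then for every decoder $\phi:\mathcal X^l\times\mathcal Y^n\to\mathcal X^n$, $$\Pr\big(\psi(A\mathbf X,\mathbf Y)\neq\mathbf X\big)\le n\,\Pr\big(\phi(A\mathbf X,\mathbf Y)\neq\mathbf X\big).$$ In particular, if $\Pr(\phi(A\mathbf X,\mathbf Y)\neq\mathbf X)=o(1/n)$ along a sequence of codes, then $\Pr(\psi(A\mathbf X,\mathbf Y)\neq\mathbf X)\to0$.
   Context: Setup: $\mathcal X,\mathcal Y$ finite, $|\mathcal X|\ge2$; $(\mathbf X,\mathbf Y)$ random on $\mathcal X^n\times\mathcal Y^n$; $A:\mathcal X^n\to\mathcal X^l$; $\{\mathcal I_0,\mathcal I_1\}$ a partition of $\{1,\dots,n\}$ with $|\mathcal I_1|=l$; $B:\mathcal X^n\to\mathcal X^{n-l}$ such that $T:\mathcal X^n\to\mathcal X^n$ is bijective, where $T(x)$ is the vector $c$ whose entries on $\mathcal I_1$ (increasing order) form $Ax$ and whose entries on $\mathcal I_0$ (increasing order) form $Bx$. Notation: $c_i^j=(c_i,\dots,c_j)$. Extended codeword: $\mathbf C=(C_1,\dots,C_n)=T(\mathbf X)$. SC decoder: for $i\in\mathcal I_0$ let $f_i(c_1^{i-1},y)\in\arg\max_{a\in\mathcal X}\mu_{C_i\mid C_1^{i-1}\mathbf Y}(a\mid c_1^{i-1},y)$ (ties and zero-probability conditions resolved by an arbitrary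 fixed rule). Given $(u,y)\in\mathcal X^l\times\mathcal Y^n$, define $\hat c$ recursively for $i=1,\dots,n$: $\hat c_{\mathcal I_1}=u$ (entries on $\mathcal I_1$ given by $u$), and $\hat c_i=f_i(\hat c_1^{i-1},y)$ for $i\in\mathcal I_0$. Then $\psi(u,y)\equiv T^{-1}(\hat c)$. *)

From HB Require Import structures.
From mathcomp Require Import all_boot all_order all_algebra.
Set Implicit Arguments. Unset Strict Implicit. Unset Printing Implicit Defensive.
Import Order.TTheory GRing.Theory Num.Theory.
Local Open Scope ring_scope.

(* Block length n = l + m; index set I_1 = {0,..,l-1} (the paper's 1..l),
   I_0 = {l,..,n-1} (the paper's l+1..n).  Vectors in X^n are {ffun 'I_n -> X}. *)

Definition extT (X : finType) (l m : nat)
  (A : {ffun 'I_(l + m) -> X} -> {ffun 'I_l -> X})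
  (B : {ffun 'I_(l + m) -> X} -> {ffun 'I_m -> X})
  (x : {ffun 'I_(l + m) -> X}) : {ffun 'I_(l + m) -> X} :=
  [ffun i => match split i with inl j => A x j | inr k => B x k end].

Definition prefix_match (X : finType) (n : nat) (c : {ffun 'I_n -> X}) (s : seq X) : bool :=
  [forall j : 'I_n, (j < size s)%N ==> (c j == nth (c j) s j)].

(* P(C_1^{i-1} = s, C_i = a, Y = y) where C = T X; here i = size s. *)
Definition joint_pref (R : realFieldType) (X Y : finType) (n : nat)
  (mu : {ffun {ffun 'I_n -> X} * {ffun 'I_n -> Y} -> R})
  (T : {ffun 'I_n -> X} -> {ffun 'I_n -> X})
  (i : 'I_n) (s : seq X) (y : {ffun 'I_n -> Y}) (a : X) : R :=
  \sum_(xy | [&& prefix_match (T xy.1) s, T xy.1 i == a & xy.2 == y]) mu xy.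

Definition marg_pref (R : realFieldType) (X Y : finType) (n : nat)
  (mu : {ffun {ffun 'I_n -> X} * {ffun 'I_n -> Y} -> R})
  (T : {ffun 'I_n -> X} -> {ffun 'I_n -> X})
  (s : seq X) (y : {ffun 'I_n -> Y}) : R :=
  \sum_(xy | prefix_match (T xy.1) s && (xy.2 == y)) mu xy.

(* Conditional probability mu_{C_i | C_1^{i-1} Y}(a | s, y); set to 0 when the
   conditioning event has probability 0 (then any argmax choice is allowed). *)
Definition cond_prob (R : realFieldType) (X Y : finType) (n : nat)
  (mu : {ffun {ffun 'I_n -> X} * {ffun 'I_n -> Y} -> R})
  (T : {ffun 'I_n -> X} -> {ffun 'I_n -> X})
  (i : 'I_n) (s : seq X) (y : {ffun 'I_n -> Y}) (a : X) : R :=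
  let d := marg_pref mu T s y in
  if d == 0 then 0 else joint_pref mu T i s y a / d.

Definition sc_step (X Y : finType) (n l : nat) (u : {ffun 'I_l -> X})
  (f : nat -> seq X -> {ffun 'I_n -> Y} -> X) (y : {ffun 'I_n -> Y})
  (k : nat) (s : seq X) : X :=
  if @insub nat (fun k => (k < l)%N) 'I_l k is Some j then u j else f k s y.

Fixpoint sc_prefix (X Y : finType) (n l : nat) (u : {ffun 'I_l -> X})
  (f : nat -> seq X -> {ffun 'I_n -> Y} -> X) (y : {ffun 'I_n -> Y})
  (k : nat) : seq X :=
  match k with
  | 0 => [::]
  | k'.+1 => rcons (sc_prefix u f y k') (sc_step u f y k' (sc_prefix u f y k'))
  end.

Definition sc_chat (X Y : finType) (n l : nat) (u : {ffun 'I_l -> X})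
  (f : nat -> seq X -> {ffun 'I_n -> Y} -> X) (y : {ffun 'I_n -> Y}) : {ffun 'I_n -> X} :=
  [ffun i : 'I_n => sc_step u f y i (sc_prefix u f y i)].

Definition err_prob (R : realFieldType) (X Y : finType) (n l : nat)
  (mu : {ffun {ffun 'I_n -> X} * {ffun 'I_n -> Y} -> R})
  (A : {ffun 'I_n -> X} -> {ffun 'I_l -> X})
  (dec : {ffun 'I_l -> X} -> {ffun 'I_n -> Y} -> {ffun 'I_n -> X}) : R :=
  \sum_(xy | dec (A xy.1) xy.2 != xy.1) mu xy.

From HB Require Import structures.
From mathcomp Require Import all_boot all_order all_algebra.
Set Implicit Arguments. Unset Strict Implicit. Unset Printing Implicit Defensive.
Import Order.TTheory GRing.Theory Num.Theory.
Local Open Scope ring_scope.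

(* If the SC decoder errs on (x, y) then its estimate of the
   extended codeword c = T x differs from c; at the first position i where it
   differs, the SC decoder has seen the correct prefix c_1^{i-1}, so i is not an
   information position (i >= l) and the rule f_i, fed the TRUE prefix, already
   guesses c_i wrongly.  Hence, by the union bound, the SC error probability is
   at most the sum over i >= l of P(f_i(C_1^{i-1}, Y) <> C_i).  Each such term is
   at most the error probability of phi: f_i is a MAP estimator of C_i from
   (C_1^{i-1}, Y), hence beats the estimator "the i-th entry of T(phi(A X, Y))",
   which may be computed from the same data since A X = C_1^l, and which is
   wrong only if phi is.  Summing n such terms gives the factor n. *)

Lemma ler_sum_subset (R : numDomainType) (I : finType) (mu : I -> R) (P Q : pred I) :
  (forall i, 0 <= mu i) -> (forall i, P i -> Q i) ->
  \sum_(i | P i) mu i <= \sum_(i | Q i) mu i.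
Proof.
move=> mu_ge0 PQ; rewrite [X in X <= _]big_mkcond [X in _ <= X]big_mkcond /=.
by apply: ler_sum => i _; case: ifP => [/PQ -> // | _]; case: ifP.
Qed.

Lemma union_bound (R : numDomainType) (I J : finType) (mu : I -> R)
    (E : pred I) (F : J -> pred I) :
  (forall i, 0 <= mu i) -> (forall i, E i -> exists j, F j i) ->
  \sum_(i | E i) mu i <= \sum_j \sum_(i | F j i) mu i.
Proof.
move=> mu_ge0 cover; rewrite (exchange_big_dep xpredT) //= big_mkcond /=.
apply: ler_sum => i _; case: ifP => [/cover [j Fji] | _].
  by rewrite (bigD1 j) //= lerDl sumr_ge0.
by rewrite sumr_ge0.
Qed.

(* No normalization of mu is needed. *)
Lemma map_estimator_optimal (R : numDomainType) (I D Z : finType) (mu : I -> R)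
    (obs : I -> D) (tgt : I -> Z) (h h' : D -> Z) :
  (forall d a, \sum_(i | (obs i == d) && (tgt i == a)) mu i
               <= \sum_(i | (obs i == d) && (tgt i == h d)) mu i) ->
  \sum_(i | h (obs i) != tgt i) mu i <= \sum_(i | h' (obs i) != tgt i) mu i.
Proof.
move=> h_map.
have wrongE (g : D -> Z) : \sum_(i | g (obs i) != tgt i) mu i =
    \sum_i mu i - \sum_d \sum_(i | (obs i == d) && (tgt i == g d)) mu i.
  have rightE : \sum_(i | g (obs i) == tgt i) mu i =
      \sum_d \sum_(i | (obs i == d) && (tgt i == g d)) mu i.
    rewrite (partition_big obs xpredT) //=; apply: eq_bigr => d _.
    by apply: eq_bigl => i; case: (obs i =P d) => [-> | _]; rewrite ?andbF ?andbT // eq_sym.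
  by rewrite -rightE [X in _ = X - _](bigID (fun i => g (obs i) == tgt i)) /= addrC addrK.
rewrite !wrongE lerD2l lerN2; exact: ler_sum.
Qed.

(* The argmax of the conditional law mu_{C_i | C_1^{i-1} Y}(. | s, y) is also an
   argmax of the joint mass P(C_1^{i-1} = s, C_i = ., Y = y): both coincide up to
   the positive factor P(C_1^{i-1} = s, Y = y), and vanish when it is zero. *)
Lemma cond_argmax_joint (R : realFieldType) (X Y : finType) (n : nat)
    (mu : {ffun {ffun 'I_n -> X} * {ffun 'I_n -> Y} -> R})
    (T : {ffun 'I_n -> X} -> {ffun 'I_n -> X}) (i : 'I_n) s y (a b : X) :
  (forall xy, 0 <= mu xy) ->
  cond_prob mu T i s y a <= cond_prob mu T i s y b ->
  joint_pref mu T i s y a <= joint_pref mu T i s y b.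
Proof.
move=> mu_ge0; rewrite /cond_prob /=.
have joint_ge0 c : 0 <= joint_pref mu T i s y c by apply: sumr_ge0.
have joint_le_marg c : joint_pref mu T i s y c <= marg_pref mu T s y.
  by apply: ler_sum_subset => // xy /and3P[-> _ ->].
case: eqP => [marg0 _ | /eqP marg_neq0].
  by rewrite (le_trans (joint_le_marg a)) // marg0 joint_ge0.
have marg_gt0 : 0 < marg_pref mu T s y by rewrite lt_def marg_neq0 sumr_ge0.
by rewrite ler_pM2r ?invr_gt0.
Qed.

Definition prefix (X : finType) (n : nat) (i : 'I_n) (c : {ffun 'I_n -> X}) :
    {ffun 'I_i -> X} :=
  [ffun j => c (widen_ord (ltnW (ltn_ord i)) j)].

Lemma prefix_matchE (X : finType) (n : nat) (i : 'I_n) (c : {ffun 'I_n -> X})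
    (k : {ffun 'I_i -> X}) :
  prefix_match c (codom k) = (prefix i c == k).
Proof.
rewrite codomE; apply/forallP/eqP => [match_k | <-].
  apply/ffunP => j; rewrite ffunE.
  have := match_k (widen_ord (ltnW (ltn_ord i)) j).
  rewrite /= size_map size_enum_ord ltn_ord /= => /eqP ->.
  by rewrite (nth_map j) ?size_enum_ord // nth_ord_enum.
move=> j; apply/implyP; rewrite size_map size_enum_ord => lt_ji.
rewrite (nth_map (Ordinal lt_ji)) ?size_enum_ord //.
rewrite (nth_ord_enum (Ordinal lt_ji) (Ordinal lt_ji)) ffunE.
by apply/eqP; congr (c _); apply: val_inj.
Qed.

Lemma first_difference (X : finType) (n : nat) (c c' : {ffun 'I_n -> X}) :
  c != c' -> exists i : 'I_n, c i != c' i /\ prefix i c = prefix i c'.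
Proof.
move=> c_neq.
have [i0 diff_i0] : exists i0, c i0 != c' i0.
  apply/existsP; apply: contraR c_neq => /existsPn same.
  by apply/eqP/ffunP => i; apply/eqP; move: (same i); rewrite negbK.
case: (@arg_minnP _ i0 (fun i => c i != c' i) (fun i : 'I_n => val i) diff_i0) => i diff_i i_min.
exists i; split=> //; apply/ffunP => j; rewrite !ffunE; apply/eqP.
by apply: contraTT (ltn_ord j) => /i_min; rewrite leqNgt.
Qed.

Lemma extT_lshift (X : finType) (l m : nat)
    (A : {ffun 'I_(l + m) -> X} -> {ffun 'I_l -> X})
    (B : {ffun 'I_(l + m) -> X} -> {ffun 'I_m -> X}) x (j : 'I_l) :
  extT A B x (lshift m j) = A x j.
Proof. by rewrite ffunE (unsplitK (inl j)). Qed.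

Lemma prefix_extT_info (X : finType) (l m : nat)
    (A : {ffun 'I_(l + m) -> X} -> {ffun 'I_l -> X})
    (B : {ffun 'I_(l + m) -> X} -> {ffun 'I_m -> X}) x (i : 'I_(l + m))
    (le_li : (l <= i)%N) :
  [ffun j : 'I_l => prefix i (extT A B x) (widen_ord le_li j)] = A x.
Proof.
apply/ffunP => j; rewrite ffunE /prefix ffunE.
have -> : widen_ord (ltnW (ltn_ord i)) (widen_ord le_li j) = lshift m j.
  exact: val_inj.
exact: extT_lshift.
Qed.

Section SCDecoder.

Variables (X Y : finType) (n l : nat) (u : {ffun 'I_l -> X}).
Variables (f : nat -> seq X -> {ffun 'I_n -> Y} -> X) (y : {ffun 'I_n -> Y}).

Lemma sc_prefix_codom (i : 'I_n) :
  sc_prefix u f y i = codom (prefix i (sc_chat u f y)).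
Proof.
have prefixE k : sc_prefix u f y k =
    map (fun j => sc_step u f y j (sc_prefix u f y j)) (iota 0 k).
  elim: k => [// | k IH].
  by rewrite -addn1 iotaD map_cat /= add0n -IH cats1 addn1.
rewrite prefixE codomE -val_enum_ord -map_comp.
by apply: eq_map => j; rewrite /= !ffunE.
Qed.

Lemma sc_chat_frozen (i : 'I_n) : (l <= i)%N ->
  sc_chat u f y i = f i (codom (prefix i (sc_chat u f y))) y.
Proof. by move=> le_li; rewrite ffunE /sc_step insubN -?leqNgt // sc_prefix_codom. Qed.

Lemma sc_chat_info (i : 'I_n) (lt_il : (i < l)%N) :
  sc_chat u f y i = u (Ordinal lt_il).
Proof.
rewrite ffunE /sc_step; case: insubP => [j _ val_j | ]; last by rewrite lt_il.
by congr (u _); apply: val_inj; exact: val_j.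
Qed.

End SCDecoder.

Section SCBound.

Variables (R : realFieldType) (X Y : finType) (l m : nat).
Variable mu : {ffun {ffun 'I_(l + m) -> X} * {ffun 'I_(l + m) -> Y} -> R}.
Hypothesis mu_ge0 : forall xy, 0 <= mu xy.
Variables (A : {ffun 'I_(l + m) -> X} -> {ffun 'I_l -> X})
          (B : {ffun 'I_(l + m) -> X} -> {ffun 'I_m -> X}).
Variable f : nat -> seq X -> {ffun 'I_(l + m) -> Y} -> X.

Local Notation T := (extT A B).

Definition sc_mistake (i : 'I_(l + m))
    (xy : {ffun 'I_(l + m) -> X} * {ffun 'I_(l + m) -> Y}) : bool :=
  f i (codom (prefix i (T xy.1))) xy.2 != T xy.1 i.

(* If the SC estimate of T x is wrong, some non-information position carries a
   genie-aided mistake: the first position where the estimate is wrong. *)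
Lemma sc_error_mistake x y :
  sc_chat (A x) f y != T x -> exists i : 'I_(l + m), (l <= i)%N && sc_mistake i (x, y).
Proof.
case/first_difference => i [wrong_i same_prefix]; exists i.
have le_li : (l <= i)%N.
  rewrite leqNgt; apply/negP => lt_il; move: wrong_i.
  rewrite sc_chat_info -(extT_lshift A B).
  by rewrite (_ : lshift m (Ordinal lt_il) = i) ?eqxx //; apply: val_inj.
by move: wrong_i; rewrite le_li sc_chat_frozen // same_prefix.
Qed.

Hypothesis f_argmax : forall (i : 'I_(l + m)), (l <= i)%N ->
  forall (s : seq X), size s = i -> forall y a,
    cond_prob mu T i s y a <= cond_prob mu T i s y (f i s y).

(* At a non-information position, the genie-aided mistakes of f_i are no more
   likely than the errors of any decoder phi: f_i is a MAP estimator of C_i from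
   (C_1^{i-1}, Y), and T(phi(C_1^l, Y))_i is a competing estimator. *)
Lemma sc_mistake_le_err (phi : {ffun 'I_l -> X} -> {ffun 'I_(l + m) -> Y} ->
                               {ffun 'I_(l + m) -> X}) (i : 'I_(l + m)) :
  (l <= i)%N -> \sum_(xy | sc_mistake i xy) mu xy <= err_prob mu A phi.
Proof.
move=> le_li.
pose obs xy : {ffun 'I_i -> X} * {ffun 'I_(l + m) -> Y} := (prefix i (T xy.1), xy.2).
pose h (d : {ffun 'I_i -> X} * {ffun 'I_(l + m) -> Y}) := f i (codom d.1) d.2.
pose h' (d : {ffun 'I_i -> X} * {ffun 'I_(l + m) -> Y}) :=
  T (phi [ffun j : 'I_l => d.1 (widen_ord le_li j)] d.2) i.
have jointE d a : \sum_(xy | (obs xy == d) && (T xy.1 i == a)) mu xy =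
    joint_pref mu T i (codom d.1) d.2 a.
  case: d => k y'; apply: eq_bigl => xy; rewrite /obs prefix_matchE xpair_eqE /=.
  by rewrite -andbA [(xy.2 == _) && _]andbC.
have h_map d a : \sum_(xy | (obs xy == d) && (T xy.1 i == a)) mu xy
    <= \sum_(xy | (obs xy == d) && (T xy.1 i == h d)) mu xy.
  rewrite !jointE; apply: cond_argmax_joint => //; apply: f_argmax => //.
  by rewrite size_codom card_ord.
apply: le_trans (map_estimator_optimal h' h_map) _.
apply: ler_sum_subset => // xy; apply: contra_neq => phi_ok.
by rewrite /h' /= prefix_extT_info phi_ok.
Qed.

End SCBound.

Theorem theorem2 (R : realFieldType) (X Y : finType) (l m : nat)
  (hX : (1 < #|X|)%N)
  (mu : {ffun {ffun 'I_(l + m) -> X} * {ffun 'I_(l + m) -> Y} -> R})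
  (mu_ge0 : forall xy, 0 <= mu xy)
  (mu_sum1 : \sum_xy mu xy = 1)
  (A : {ffun 'I_(l + m) -> X} -> {ffun 'I_l -> X})
  (B : {ffun 'I_(l + m) -> X} -> {ffun 'I_m -> X})
  (Tinv : {ffun 'I_(l + m) -> X} -> {ffun 'I_(l + m) -> X})
  (TK : cancel (extT A B) Tinv) (TinvK : cancel Tinv (extT A B))
  (f : nat -> seq X -> {ffun 'I_(l + m) -> Y} -> X)
  (f_argmax : forall (i : 'I_(l + m)), (l <= i)%N ->
      forall (s : seq X), size s = i -> forall y a,
        cond_prob mu (extT A B) i s y a <= cond_prob mu (extT A B) i s y (f i s y))
  (phi : {ffun 'I_l -> X} -> {ffun 'I_(l + m) -> Y} -> {ffun 'I_(l + m) -> X}) :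
  err_prob mu A (fun u y => Tinv (sc_chat u f y))
    <= (l + m)%:R * err_prob mu A phi.
Proof.
have sc_cover xy : Tinv (sc_chat (A xy.1) f xy.2) != xy.1 ->
    exists i : 'I_(l + m), (l <= i)%N && sc_mistake A B f i xy.
  case: xy => x y /= sc_wrong; apply: sc_error_mistake.
  by apply: contra_neq sc_wrong => ->; rewrite TK.
apply: le_trans (union_bound mu_ge0 sc_cover) _.
rewrite mulr_natl -[in X in _ *+ X](card_ord (l + m)) -sumr_const.
apply: ler_sum => i _.
case: (leqP l i) => [le_li | _]; first exact: sc_mistake_le_err.
by rewrite big_pred0 ?sumr_ge0.
Qed.
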